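(* For every $n\in\mathbb{N}$ and every real $t$ with $|t|<1$, \[ \frac{(\operatorname{arctanh} t)^n}{n!}=\sum_{k=0}^{\infty}\left(\sum_{\ell_{n-1}=0}^{k}\frac{1}{2\ell_{n-1}+n-1}\sum_{\ell_{n-2}=0}^{\ell_{n-1}}\frac{1}{2\ell_{n-2}+n-2}\cdots\sum_{\ell_2=0}^{\ell_3}\frac{1}{2\ell_2+2}\sum_{\ell_1=0}^{\ell_2}\frac{1}{2\ell_1+1}\right)\frac{t^{2k+n}}{2k+n}, \] i.e. the coefficient in parentheses is $\prod_{m=1}^{n-1}\sum_{\ell_m=0}^{\ell_{m+1}}\frac{1}{2\ell_m+m}$ (nested sums, with $\ell_n=k$), which is understood to be $1$ when $n=1$. *)

From Stdlib Require Import Reals Arith.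
From Coquelicot Require Import Coquelicot.
Open Scope R_scope.

Definition artanh (t : R) : R := / 2 * ln ((1 + t) / (1 - t)).

(* atanh_coef m k = coefficient for n = m+1 in the theorem:
   atanh_coef 0 k = 1  (case n = 1),
   atanh_coef (m+1) k = sum_{l=0}^{k} 1/(2l + m + 1) * atanh_coef m l,
   i.e. for n = m+2 the outermost sum over l_{n-1} = l from 0 to k with
   weight 1/(2 l_{n-1} + n - 1), nested around the coefficient for n-1. *)
Fixpoint atanh_coef (m : nat) (k : nat) : R :=
  match m with
  | O => 1
  | S m' => sum_f_R0 (fun l => / (2 * INR l + INR m) * atanh_coef m' l) k
  end.

(* Write c_m = atanh_coef m and w_m k = c_m k / (2k+m+1), so that the claim for
   n = m+1 reads  artanh(t)^(m+1)/(m+1)! = sum_k w_m k * t^(2k+m+1).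
   The proof is an induction on m driven by the Cauchy product
      artanh^(m+2)/(m+2)! = 1/(m+2) * (artanh^(m+1)/(m+1)!) * artanh.
   1. Coefficients.  A purely finite computation shows that convolving with
      the series of artanh itself (the weights w_0 k = 1/(2k+1)) multiplies
      the index by (m+2):  sum_{k<=K} w_m k * w_0 (K-k) = (m+2) w_(m+1) K.
      It rests on the companion identity sum_k c_m k w_0 (K-k) = (m+1) c_(m+1) K,
      and the two are proved together by induction on m.
   2. The case n = 1.  artanh is the sum of the power series with coefficient
      1/j on odd j: both vanish at 0 and have derivative 1/(1-t^2).
   3. The induction step multiplies two absolutely convergent series (all
      weights are nonnegative, so absolute convergence is the claim at |t|)
      and rewrites the Cauchy product with the identity of step 1. *)

From Stdlib Require Import Reals Arith Lia Lra.
From Coquelicot Require Import Coquelicot.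
Open Scope R_scope.

Lemma INR_succ_pos (n : nat) : 0 < INR (S n).
Proof. apply lt_0_INR; lia. Qed.

Lemma convolution_comm (f g : nat -> R) (K : nat) :
  sum_f_R0 (fun k => f k * g (K - k)%nat) K
  = sum_f_R0 (fun k => g k * f (K - k)%nat) K.
Proof.
  rewrite <- sum_f_R0_skip. apply sum_eq. intros i Hi.
  replace (K - (K - i))%nat with i by lia. ring.
Qed.

Lemma convolution_partial_sums (f g : nat -> R) (K : nat) :
  sum_f_R0 (fun j => g j * sum_f_R0 f (K - j)%nat) K
  = sum_f_R0 (fun k => sum_f_R0 (fun j => g j * f (k - j)%nat) k) K.
Proof.
  induction K as [|K IH].
  - simpl. ring.
  - rewrite tech5, (tech5 (fun k => _)), <- IH, tech5.
    replace (S K - S K)%nat with 0%nat by lia.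
    rewrite (sum_eq (fun j => g j * sum_f_R0 f (S K - j)%nat)
      (fun j => g j * sum_f_R0 f (K - j)%nat + g j * f (S K - j)%nat)).
    2:{ intros i Hi. replace (S K - i)%nat with (S (K - i)) by lia.
        rewrite tech5. ring. }
    rewrite sum_plus. simpl (sum_f_R0 f 0). ring.
Qed.

Definition atanh_weight (m k : nat) : R := atanh_coef m k / INR (2 * k + m + 1).

Lemma atanh_coef_succ (m K : nat) :
  atanh_coef (S m) K = sum_f_R0 (atanh_weight m) K.
Proof.
  simpl atanh_coef. apply sum_eq. intros i _. unfold atanh_weight.
  replace (2 * i + m + 1)%nat with (S (2 * i + m)) by lia.
  rewrite S_INR, plus_INR, mult_INR. simpl (INR 2).
  unfold Rdiv. rewrite Rmult_comm. do 2 f_equal. destruct m; simpl; ring.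
Qed.

Lemma atanh_coef_nonneg (m k : nat) : 0 <= atanh_coef m k.
Proof.
  revert k; induction m as [|m IH]; intro k; simpl; [lra|].
  apply cond_pos_sum. intro l. apply Rmult_le_pos; [|apply IH].
  left. apply Rinv_0_lt_compat. pose proof (pos_INR l).
  destruct m; [simpl; lra|]. pose proof (INR_succ_pos m). lra.
Qed.

Lemma atanh_weight_nonneg (m k : nat) : 0 <= atanh_weight m k.
Proof.
  apply Rmult_le_pos; [apply atanh_coef_nonneg|].
  left. apply Rinv_0_lt_compat.
  replace (2 * k + m + 1)%nat with (S (2 * k + m)) by lia. apply INR_succ_pos.
Qed.

(* Writing 2K+m+2 = (2k+m+1) + (2(K-k)+1) splits the convolution of weights
   into the convolution of c_m with w_0 plus the partial sum c_(m+1) K;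
   hence the weight identity at m follows from the coefficient identity at m. *)
Lemma weight_convolution_of_coef_convolution (m : nat) :
  (forall K, sum_f_R0 (fun k => atanh_coef m k * atanh_weight 0 (K - k)) K
             = INR (m + 1) * atanh_coef (S m) K) ->
  forall K, INR (m + 2) * atanh_weight (S m) K
            = sum_f_R0 (fun k => atanh_weight m k * atanh_weight 0 (K - k)) K.
Proof.
  intros Hcoef K.
  assert (HD : 0 < INR (2 * K + S m + 1)).
  { replace (2 * K + S m + 1)%nat with (S (2 * K + S m)) by lia.
    apply INR_succ_pos. }
  apply (Rmult_eq_reg_r (INR (2 * K + S m + 1))); [|lra].
  rewrite (Rmult_comm (sum_f_R0 _ _)), scal_sum.
  rewrite (sum_eq _ (fun k => atanh_coef m k * atanh_weight 0 (K - k)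
                              + atanh_weight m k)).
  2:{ intros i Hi. unfold atanh_weight.
      assert (Hi1 : 0 < INR (2 * i + m + 1)).
      { replace (2 * i + m + 1)%nat with (S (2 * i + m)) by lia.
        apply INR_succ_pos. }
      assert (Hi2 : 0 < INR (2 * (K - i) + 0 + 1)).
      { replace (2 * (K - i) + 0 + 1)%nat with (S (2 * (K - i))) by lia.
        apply INR_succ_pos. }
      replace (INR (2 * K + S m + 1))
        with (INR (2 * i + m + 1) + INR (2 * (K - i) + 0 + 1))
        by (rewrite <- plus_INR; f_equal; lia).
      simpl (atanh_coef 0 _). field. lra. }
  rewrite sum_plus, Hcoef, <- atanh_coef_succ.
  unfold atanh_weight. field_simplify; [|lra].
  rewrite !plus_INR. simpl. field.
Qed.

Lemma coef_convolution (m K : nat) :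
  sum_f_R0 (fun k => atanh_coef m k * atanh_weight 0 (K - k)) K
  = INR (m + 1) * atanh_coef (S m) K.
Proof.
  revert K; induction m as [|m IH]; intro K.
  - rewrite atanh_coef_succ. simpl atanh_coef.
    rewrite (sum_eq _ (fun k => atanh_weight 0 (K - k))) by (intros; ring).
    rewrite sum_f_R0_skip. simpl. ring.
  - pose proof (weight_convolution_of_coef_convolution m IH) as Hweight.
    rewrite (sum_eq _ (fun k => sum_f_R0 (atanh_weight m) k * atanh_weight 0 (K - k)))
      by (intros; rewrite atanh_coef_succ; reflexivity).
    rewrite convolution_comm, convolution_partial_sums.
    rewrite (sum_eq _ (fun k => INR (m + 2) * atanh_weight (S m) k)).
    2:{ intros i _. rewrite Hweight. apply convolution_comm. }
    rewrite (atanh_coef_succ (S m)), scal_sum.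
    replace (S m + 1)%nat with (m + 2)%nat by lia.
    apply sum_eq. intros; ring.
Qed.

Lemma weight_convolution (m K : nat) :
  sum_f_R0 (fun k => atanh_weight m k * atanh_weight 0 (K - k)) K
  = INR (m + 2) * atanh_weight (S m) K.
Proof.
  symmetry. apply weight_convolution_of_coef_convolution.
  intro; apply coef_convolution.
Qed.

Lemma Rabs_sqr_lt_1 (x : R) : Rabs x < 1 -> Rabs (x ^ 2) < 1.
Proof. intros H. rewrite <- RPow_abs. pose proof (Rabs_pos x). simpl. nra. Qed.

Lemma is_pseries_null (a : nat -> R) (x : R) :
  (forall n, a n = 0) -> is_pseries a x 0.
Proof.
  intros Ha. apply (is_series_ext (fun _ => 0)).
  - intro n. rewrite Ha. unfold scal; simpl; unfold mult; simpl. ring.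
  - apply filterlim_ext with (fun _ => 0).
    + intro n. rewrite sum_n_const. ring.
    + apply filterlim_const.
Qed.

Lemma CV_radius_of_bounded_coef (a : nat -> R) :
  (forall n, Rabs (a n) <= 1) ->
  forall x, Rabs x < 1 -> Rbar_lt (Rabs x) (CV_radius a).
Proof.
  intros Ha x Hx. destruct (CV_radius_bounded a) as [Hub _].
  set (r := (Rabs x + 1) / 2).
  apply Rbar_lt_le_trans with (Finite r); [simpl; unfold r; lra|].
  apply Hub. exists 1. intro n.
  pose proof (Rabs_pos x).
  assert (Hr : 0 <= r <= 1) by (unfold r; lra).
  assert (Hrn : 0 <= r ^ n <= 1).
  { split; [apply pow_le; lra|]. rewrite <- (pow1 n). apply pow_incr. lra. }
  rewrite Rabs_mult, <- RPow_abs, (Rabs_pos_eq r) by lra.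
  pose proof (Ha n). pose proof (Rabs_pos (a n)). nra.
Qed.

(* The derivative of artanh, 1/(1-x^2), is the power series of the indicator
   of the even numbers. *)
Definition even_indicator (n : nat) : R := if Nat.even n then 1 else 0.

Lemma even_indicator_pseries (x : R) :
  Rabs x < 1 -> is_pseries even_indicator x (/ (1 - x ^ 2)).
Proof.
  intros H.
  replace (/ (1 - x ^ 2)) with (/ (1 - x ^ 2) + x * 0) by ring.
  apply is_pseries_odd_even.
  - eapply is_series_ext; [|apply (is_series_geom (x ^ 2) (Rabs_sqr_lt_1 x H))].
    intro n. unfold even_indicator. rewrite Nat.even_mul.
    change ((x ^ 2) ^ n = pow_n (x ^ 2) n * 1).
    rewrite Rmult_1_r. symmetry. apply pow_n_pow.
  - apply is_pseries_null. intro n. unfold even_indicator.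
    rewrite Nat.even_odd. reflexivity.
Qed.

Definition artanh_pseries (x : R) : R := PSeries (PS_Int even_indicator) x.

Lemma artanh_pseries_derive (x : R) :
  Rabs x < 1 -> is_derive artanh_pseries x (/ (1 - x ^ 2)).
Proof.
  intros H.
  assert (Hr : Rbar_lt (Rabs x) (CV_radius (PS_Int even_indicator))).
  { rewrite CV_radius_Int. apply CV_radius_of_bounded_coef; [|exact H].
    intro n. unfold even_indicator.
    destruct (Nat.even n); rewrite ?Rabs_R1, ?Rabs_R0; lra. }
  assert (E : PSeries (PS_derive (PS_Int even_indicator)) x = / (1 - x ^ 2)).
  { rewrite (PSeries_ext _ even_indicator).
    - apply is_pseries_unique, even_indicator_pseries, H.
    - intro n. unfold PS_derive, PS_Int. field. apply not_0_INR. lia. }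
  rewrite <- E. apply is_derive_PSeries, Hr.
Qed.

Lemma artanh_derive (x : R) : Rabs x < 1 -> is_derive artanh x (/ (1 - x ^ 2)).
Proof.
  intros H. apply Rabs_def2 in H. destruct H as [H1 H2]. unfold artanh.
  auto_derive.
  - split; [intro; lra | split; auto]. apply Rdiv_lt_0_compat; lra.
  - field; repeat split; intro; nra.
Qed.

(* Same derivative on (-1,1) and same value at 0. *)
Lemma artanh_pseries_eq (t : R) : Rabs t < 1 -> artanh_pseries t = artanh t.
Proof.
  intros Ht.
  assert (Hder : forall c, Rabs (c - 0) <= Rabs t ->
                   is_derive (fun y => artanh_pseries y - artanh y) c 0).
  { intros c Hc. rewrite Rminus_0_r in Hc.
    replace 0 with (/ (1 - c ^ 2) - / (1 - c ^ 2)) by ring.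
    apply (is_derive_minus artanh_pseries artanh);
      [apply artanh_pseries_derive | apply artanh_derive]; lra. }
  destruct (MVT_cor4 _ (fun _ => 0) 0 (Rabs t) Hder t) as [c [Hc _]];
    [rewrite Rminus_0_r; lra|].
  assert (Hzero : artanh_pseries 0 = 0 /\ artanh 0 = 0).
  { unfold artanh_pseries, artanh. rewrite PSeries_0.
    replace ((1 + 0) / (1 - 0)) with 1 by field. rewrite ln_1.
    split; [reflexivity | ring]. }
  lra.
Qed.

(* The case n = 1: artanh t = sum_k t^(2k+1)/(2k+1).  The series of
   artanh_pseries splits into its vanishing even part and its odd part. *)
Lemma artanh_series (t : R) :
  Rabs t < 1 -> is_series (fun k => t ^ (2 * k + 1) / INR (2 * k + 1)) (artanh t).
Proof.
  intros Ht.
  set (a := PS_Int even_indicator).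
  assert (Hodd : forall n, a (2 * n + 1)%nat = / INR (2 * n + 1)).
  { intro n. replace (2 * n + 1)%nat with (S (2 * n)) by lia.
    unfold a, PS_Int, even_indicator. rewrite Nat.even_mul. simpl.
    unfold Rdiv. ring. }
  assert (Heven : forall n, a (2 * n)%nat = 0).
  { intros [|n]; [reflexivity|].
    replace (2 * S n)%nat with (S (2 * n + 1)) by lia.
    unfold a, PS_Int, even_indicator. rewrite Nat.even_odd.
    unfold Rdiv. ring. }
  assert (Hbound : forall n, Rabs (a (2 * n + 1)%nat) <= 1).
  { intro n. rewrite Hodd.
    assert (1 <= INR (2 * n + 1)) by (apply (le_INR 1); lia).
    rewrite Rabs_pos_eq by (left; apply Rinv_0_lt_compat; lra).
    rewrite <- Rinv_1. apply Rinv_le_contravar; lra. }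
  destruct (CV_radius_inside _ _
    (CV_radius_of_bounded_coef _ Hbound _ (Rabs_sqr_lt_1 t Ht))) as [l Hl].
  assert (Hsum : artanh t = t * l).
  { rewrite <- artanh_pseries_eq by exact Ht.
    rewrite <- (Rplus_0_l (t * l)).
    apply is_pseries_unique, is_pseries_odd_even; [|exact Hl].
    apply is_pseries_null, Heven. }
  rewrite Hsum.
  eapply is_series_ext; [|apply (is_series_scal t _ _ Hl)].
  intro n. cbv beta. rewrite Hodd.
  change (t * (pow_n (t ^ 2) n * / INR (2 * n + 1)) = t ^ (2 * n + 1) / INR (2 * n + 1)).
  rewrite pow_n_pow, pow_add, pow_mult. unfold Rdiv. ring.
Qed.

Definition artanh_power_term (m : nat) (t : R) (k : nat) : R :=
  atanh_coef m k * t ^ (2 * k + S m) / INR (2 * k + S m).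

Lemma artanh_power_term_weight (m : nat) (t : R) (k : nat) :
  artanh_power_term m t k = atanh_weight m k * t ^ (2 * k + S m).
Proof.
  unfold artanh_power_term, atanh_weight.
  replace (2 * k + m + 1)%nat with (2 * k + S m)%nat by lia.
  unfold Rdiv. ring.
Qed.

(* Since the weights are nonnegative, a series of terms at |t| is the series
   of absolute values of the terms at t. *)
Lemma artanh_power_term_abs (m : nat) (t : R) (k : nat) :
  Rabs (artanh_power_term m t k) = artanh_power_term m (Rabs t) k.
Proof.
  rewrite !artanh_power_term_weight, Rabs_mult, RPow_abs.
  rewrite (Rabs_pos_eq (atanh_weight m k)) by apply atanh_weight_nonneg.
  reflexivity.
Qed.

Lemma artanh_power_abs_summable (m : nat) (t : R) :
  Rabs t < 1 ->
  (forall s, Rabs s < 1 ->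
     is_series (artanh_power_term m s) (artanh s ^ S m / INR (fact (S m)))) ->
  ex_series (fun k => Rabs (artanh_power_term m t k)).
Proof.
  intros Ht Hm. eexists. eapply is_series_ext; [|apply (Hm (Rabs t))].
  - intro k. symmetry. apply artanh_power_term_abs.
  - rewrite Rabs_Rabsolu. exact Ht.
Qed.

Lemma artanh_power_series (m : nat) :
  forall t, Rabs t < 1 ->
  is_series (artanh_power_term m t) (artanh t ^ S m / INR (fact (S m))).
Proof.
  assert (Hbase : forall s, Rabs s < 1 ->
            is_series (artanh_power_term 0 s) (artanh s ^ 1 / INR (fact 1))).
  { intros s Hs.
    replace (artanh s ^ 1 / INR (fact 1)) with (artanh s) by (simpl; field).
    eapply is_series_ext; [|apply (artanh_series s Hs)].
    intro k. unfold artanh_power_term. simpl (atanh_coef 0 k). rewrite Rmult_1_l. reflexivity. }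
  induction m as [|m IH]; intros t Ht; [exact (Hbase t Ht)|].
  pose proof (is_series_mult _ _ _ _ (IH t Ht) (Hbase t Ht)
    (artanh_power_abs_summable m t Ht IH)
    (artanh_power_abs_summable 0 t Ht Hbase)) as Hprod.
  pose proof (is_series_scal (/ INR (m + 2)) _ _ Hprod) as Hscaled.
  replace (artanh t ^ S (S m) / INR (fact (S (S m))))
    with (scal (/ INR (m + 2))
            (artanh t ^ S m / INR (fact (S m)) * (artanh t ^ 1 / INR (fact 1)))).
  2:{ change (/ INR (m + 2) * (artanh t ^ S m / INR (fact (S m))
                               * (artanh t ^ 1 / INR (fact 1)))
              = artanh t ^ S (S m) / INR (fact (S (S m)))).
      replace (fact (S (S m))) with (S (S m) * fact (S m))%nat by reflexivity.
      replace (m + 2)%nat with (S (S m)) by lia.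
      rewrite mult_INR. simpl (INR (fact 1)).
      pose proof (INR_fact_neq_0 (S m)). pose proof (INR_succ_pos (S m)).
      simpl pow. field. split; lra. }
  eapply is_series_ext; [|exact Hscaled].
  intro K. cbv beta.
  change (/ INR (m + 2) * sum_f_R0 (fun k => artanh_power_term m t k
                                          * artanh_power_term 0 t (K - k)) K
          = artanh_power_term (S m) t K).
  rewrite (sum_eq _ (fun k => atanh_weight m k * atanh_weight 0 (K - k)
                              * t ^ (2 * K + S (S m)))).
  2:{ intros i Hi. rewrite !artanh_power_term_weight.
      replace (2 * K + S (S m))%nat with ((2 * i + S m) + (2 * (K - i) + 1))%nat
        by lia.
      rewrite (pow_add t (2 * i + S m)). ring. }
  rewrite <- scal_sum, weight_convolution, artanh_power_term_weight.
  pose proof (INR_succ_pos (S m)). replace (m + 2)%nat with (S (S m)) by lia.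
  field. lra.
Qed.

Theorem mainTheorem10 (n : nat) (t : R) :
  (1 <= n)%nat -> Rabs t < 1 ->
  is_series
    (fun k : nat => atanh_coef (n - 1) k * t ^ (2 * k + n) / INR (2 * k + n))
    (artanh t ^ n / INR (fact n)).
Proof.
  intros Hn Ht. destruct n as [|m]; [lia|].
  replace (S m - 1)%nat with m by lia.
  exact (artanh_power_series m t Ht).
Qed.
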